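(* Let $\mathcal{H}$ be a separable Hilbert space, $\{\mathcal{H}_j\}_{j\in J}$ ($J\subseteq\mathbb{Z}$) a sequence of closed subspaces of $\mathcal{H}$, and $K\in\mathcal{B}(\mathcal{H})$ with closed range $\mathcal{R}(K)$. Let $\{\Lambda_j\}_{j\in J}$ and $\{\Theta_j\}_{j\in J}$ be $g$-Bessel sequences with $\Lambda_j,\Theta_j\in\mathcal{B}(\mathcal{H},\mathcal{H}_j)$, and let $U:\mathcal{R}(K)\to\mathcal{R}(K)$, $Uf=\sum_{j\in J}\Lambda_j^{\ast}\Theta_jf$, satisfy $\|I_{\mathcal{R}(K)}-U\|<1$ (i.e. $\{\Theta_j\}$ is an approximate $K$-$g$-dual of $\{\Lambda_j\}$). Then $U$ is invertible on $\mathcal{R}(K)$, and $\{\Theta_jU^{-1}\}_{j\in J}$ (operators $\mathcal{R}(K)\to\mathcal{H}_j$) is a $K$-$g$-dual of $\{\Lambda_j\}_{j\in J}$, i.e. it is a $g$-Bessel sequence on $\mathcal{R}(K)$ and $\sum_{j\in J}\Lambda_j^{\ast}\Theta_jU^{-1}f=f$ for all $f\in\mathcal{R}(K)$.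
   Context: A sequence $\{\Lambda_j\in\mathcal{B}(\mathcal{H},\mathcal{H}_j)\}_{j\in J}$ is $g$-Bessel if there is $B>0$ with $\sum_{j\in J}\|\Lambda_jf\|^2\leq B\|f\|^2$ for all $f\in\mathcal{H}$; $T_\Lambda:\{g_j\}\mapsto\sum_j\Lambda_j^\ast g_j$ denotes its synthesis operator, so $U=T_\Lambda T_\Theta^\ast$ restricted to $\mathcal{R}(K)$. The sequences are called approximately dual $K$-$g$-frames if $\|I_{\mathcal{R}(K)}-T_\Lambda T_\Theta^\ast\|<1$, where $T_\Lambda T_\Theta^\ast$ is regarded as an operator on $\mathcal{R}(K)$. *)

From mathcomp Require Import all_boot all_order all_algebra.
From mathcomp Require Import all_classical all_reals all_analysis.
From mathcomp Require Import complex finmap.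
Set Implicit Arguments. Unset Strict Implicit. Unset Printing Implicit Defensive.
Import Order.TTheory GRing.Theory Num.Theory numFieldNormedType.Exports.
Local Open Scope classical_set_scope.
Local Open Scope ring_scope.

Section HilbertDefs.
Variable R : realType.
Variable V : completeNormedModType R[i].

(* real-valued norm: the norm of V takes values in R[i] but is real *)
Definition nrm (x : V) : R := complex.Re `|x|.

Definition is_inner_product (ip : V -> V -> R[i]) : Prop :=
  [/\ (forall (a : R[i]) (x y z : V), ip (a *: x + y) z = a * ip x z + ip y z),
      (forall x y : V, ip x y = (ip y x)^*) &
      (forall x : V, `|x| ^+ 2 = ip x x)].

Definition separable_space : Prop :=
  exists D : set V, countable D /\ closure D = setT.

Definition closed_subspace (S : set V) : Prop :=
  [/\ S 0, (forall (a : R[i]) (x y : V), S x -> S y -> S (a *: x + y)) & closed S].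

Definition bounded_linear (T : V -> V) : Prop :=
  (forall (a : R[i]) (x y : V), T (a *: x + y) = a *: T x + T y) /\
  exists M : R, forall x, nrm (T x) <= M * nrm x.

Definition bounded_linear_on (S : set V) (T : V -> V) : Prop :=
  (forall (a : R[i]) (x y : V), S x -> S y -> T (a *: x + y) = a *: T x + T y) /\
  exists M : R, forall x, S x -> nrm (T x) <= M * nrm x.

(* unconditional convergence of \sum_{j in J} u j to s (net of finite subsets of J) *)
Definition HasSum (J : set int) (u : int -> V) (s : V) : Prop :=
  forall e : R, 0 < e -> exists F0 : {fset int},
    (forall j, j \in F0 -> J j) /\
    forall F : {fset int}, {subset F0 <= F} -> (forall j, j \in F -> J j) ->
      nrm (\sum_(j <- F) u j - s) < e.

(* g-Bessel sequence on the subspace S: sum_j ||L_j f||^2 <= B ||f||^2, f in S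
   (for nonnegative terms the sum is the sup of the finite partial sums) *)
Definition gBessel_on (S : set V) (J : set int) (L : int -> V -> V) : Prop :=
  exists B : R, 0 < B /\ forall f, S f -> forall F : {fset int},
    (forall j, j \in F -> J j) ->
    \sum_(j <- F) nrm (L j f) ^+ 2 <= B * nrm f ^+ 2.

Definition opnorm_on (S : set V) (T : V -> V) : \bar R :=
  ereal_sup [set (nrm (T f))%:E | f in [set f | S f /\ nrm f <= 1]].

End HilbertDefs.

From mathcomp Require Import all_boot all_order all_algebra.
From mathcomp Require Import all_classical all_reals all_analysis.
From mathcomp Require Import complex finmap.
From mathcomp Require Import ring lra.
Set Implicit Arguments. Unset Strict Implicit. Unset Printing Implicit Defensive.
Import Order.TTheory GRing.Theory Num.Theory numFieldNormedType.Exports.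
Local Open Scope classical_set_scope.
Local Open Scope ring_scope.
Local Open Scope complex_scope.

(* U is linear on R(K), since every summand Lam_j^* Theta_j is (an adjoint is
   linear) and unconditional sums are unique.  The hypothesis ||I - U|| < 1
   gives q < 1 with ||f - U f|| <= q ||f|| on R(K), hence
   (1 - q) ||f|| <= ||U f||: U is injective with an inverse bounded by
   1 / (1 - q), and U f = g is solved by the fixed point of the contraction
   f |-> g + (f - U f) of the closed subspace R(K).  Then Theta_j U^-1 is
   g-Bessel with bound B / (1 - q)^2, and
   sum_j Lam_j^* Theta_j U^-1 f = U (U^-1 f) = f. *)

Section RealNorm.
Context {R : realType} {V : completeNormedModType R[i]}.
Implicit Types (x y : V) (a : R[i]).

Lemma ge0_complexE {z : R[i]} : 0 <= z -> z = (complex.Re z)%:C.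
Proof. by case: z => a b; rewrite lecE /= => /andP[/eqP -> _]. Qed.

Lemma nrmE x : `|x| = (nrm x)%:C.
Proof. exact/ge0_complexE/normr_ge0. Qed.

Lemma nrm_lt x (e : R) : (`|x| < e%:C) = (nrm x < e).
Proof. by rewrite nrmE ltcR. Qed.

Lemma nrm_ge0 x : 0 <= nrm x.
Proof. by have := normr_ge0 x; rewrite nrmE lecR. Qed.

Lemma nrmD x y : nrm (x + y) <= nrm x + nrm y.
Proof. by have := ler_normD x y; rewrite !nrmE -rmorphD lecR. Qed.

Lemma nrmN x : nrm (- x) = nrm x.
Proof. by rewrite /nrm normrN. Qed.

Lemma nrmB x y : nrm (x - y) = nrm (y - x).
Proof. by rewrite -nrmN opprB. Qed.

Lemma nrm0 : nrm (0 : V) = 0.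
Proof. by rewrite /nrm normr0. Qed.

Lemma nrm_eq0 x : (nrm x == 0) = (x == 0).
Proof. by rewrite -[RHS]normr_eq0 nrmE fmorph_eq0. Qed.

Lemma nrmZ a x : nrm (a *: x) = complex.Re `|a| * nrm x.
Proof.
by rewrite {1}/nrm normrZ nrmE (ge0_complexE (normr_ge0 a)) -rmorphM.
Qed.

Lemma nrmZr (c : R) x : nrm (c%:C *: x) = `|c| * nrm x.
Proof. by rewrite nrmZ normc_def /= expr0n /= addr0 sqrtr_sqr. Qed.

End RealNorm.

Section HasSum.
Context {R : realType} {V : completeNormedModType R[i]} {J : set int}.
Implicit Types (u v : int -> V) (s t : V).

Lemma eq_HasSum u v s : (forall j, J j -> u j = v j) ->
  HasSum J u s -> HasSum J v s.
Proof.
move=> euv us e e0; have [F0 [F0J F0s]] := us e e0; exists F0; split=> // F F0F FJ.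
by rewrite -(eq_big_seq (F1 := u)) => [|j /FJ/euv]; [exact: F0s|].
Qed.

Lemma HasSum_unique u s t : HasSum J u s -> HasSum J u t -> s = t.
Proof.
move=> us ut; apply/eqP; rewrite -subr_eq0 -nrm_eq0 eq_le nrm_ge0 andbT.
apply/ler_addgt0Pr => e e0; rewrite add0r; have e2 : 0 < e / 2 by rewrite divr_gt0.
have [F1 [F1J F1s]] := us _ e2; have [F2 [F2J F2t]] := ut _ e2.
have FJ j : j \in (F1 `|` F2)%fset -> J j by rewrite inE => /orP[/F1J|/F2J].
have := F1s (F1 `|` F2)%fset (fsubsetP (fsubsetUl _ _)) FJ.
have := F2t (F1 `|` F2)%fset (fsubsetP (fsubsetUr _ _)) FJ.
set sF := \sum_(j <- _) u j => sFt sFs.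
rewrite -(subrKA sF) addrC -opprB (le_trans (nrmD _ _)) // nrmN.
by rewrite [e](splitr e) ltW ?ltrD.
Qed.

Lemma HasSumZD u v s t (a : R[i]) : HasSum J u s -> HasSum J v t ->
  HasSum J (fun j => a *: u j + v j) (a *: s + t).
Proof.
move=> us vt e e0; pose c := complex.Re `|a| + 1.
have a0 : 0 <= complex.Re `|a| by have := normr_ge0 a; rewrite lecE => /andP[].
have c0 : 0 < c by rewrite ltr_wpDl.
have ec : 0 < e / 2 / c by rewrite !divr_gt0.
have [F1 [F1J F1s]] := us _ ec; have [F2 [F2J F2t]] := vt _ ec.
exists (F1 `|` F2)%fset; split=> [j|F F12F FJ].
  by rewrite inE => /orP[/F1J|/F2J].
have := F1s F (fun j jF => F12F j (fsubsetP (fsubsetUl _ _) j jF)) FJ.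
have := F2t F (fun j jF => F12F j (fsubsetP (fsubsetUr _ _) j jF)) FJ.
move=> Ft Fs; rewrite big_split /= -scaler_sumr.
rewrite opprD addrACA -scalerBr.
apply: (le_lt_trans (nrmD _ _)); rewrite nrmZ.
apply: (@le_lt_trans _ _ (complex.Re `|a| * (e / 2 / c) + e / 2 / c)).
  by apply: lerD; [apply: ler_wpM2l => //; apply: ltW Fs|apply: ltW Ft].
rewrite -[X in _ + X]mul1r -mulrDl mulrC divfK ?gt_eqF //.
by rewrite ltr_pdivrMr // ltr_pMr // ltr1n.
Qed.

End HasSum.

Section LinearOn.
Context {R : realType} {V : completeNormedModType R[i]}.

Definition linear_on (S : set V) (T : V -> V) : Prop :=
  forall (a : R[i]) (x y : V), S x -> S y -> T (a *: x + y) = a *: T x + T y.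

Lemma linear_on_comp (S S' : set V) (T T' : V -> V) :
  linear_on S T -> (forall x, S x -> S' (T x)) -> linear_on S' T' ->
  linear_on S (T' \o T).
Proof. by move=> lT TS' lT' a x y Sx Sy /=; rewrite lT // lT' //; apply: TS'. Qed.

Variables (S : set V) (S0 : S 0).
Hypothesis SZD : forall (a : R[i]) (x y : V), S x -> S y -> S (a *: x + y).

Lemma subspaceD x y : S x -> S y -> S (x + y).
Proof. by rewrite -{2}[x]scale1r; apply: SZD. Qed.

Lemma subspaceZ a x : S x -> S (a *: x).
Proof. by move=> Sx; rewrite -[_ *: _]addr0; apply: SZD. Qed.

Lemma subspaceB x y : S x -> S y -> S (x - y).
Proof. by move=> Sx Sy; rewrite addrC -scaleN1r; apply: SZD. Qed.

Variables (T : V -> V) (lT : linear_on S T).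

Lemma linear_on0 : T 0 = 0.
Proof.
have := @lT 1 0 0 S0 S0; rewrite !scale1r addr0 => T00.
by apply: (addrI (T 0)); rewrite addr0 -T00.
Qed.

Lemma linear_onZ a x : S x -> T (a *: x) = a *: T x.
Proof. by move=> Sx; rewrite -[_ *: x]addr0 lT // linear_on0 addr0. Qed.

Lemma linear_onB x y : S x -> S y -> T (x - y) = T x - T y.
Proof. by move=> Sx Sy; rewrite addrC -scaleN1r lT // scaleN1r addrC. Qed.

End LinearOn.

Section OperatorNorm.
Context {R : realType} {V : completeNormedModType R[i]}.
Variables (S : set V) (S0 : S 0).
Hypothesis SZD : forall (a : R[i]) (x y : V), S x -> S y -> S (a *: x + y).
Variables (T : V -> V) (lT : linear_on S T).

Lemma linear_on_unit_bound (q : R) :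
  (forall f, S f -> nrm f <= 1 -> nrm (T f) <= q) ->
  forall f, S f -> nrm (T f) <= q * nrm f.
Proof.
move=> Tq f Sf; have [->|f_neq0] := eqVneq f 0.
  by rewrite (linear_on0 S0 lT) !nrm0 mulr0.
have f_gt0 : 0 < nrm f by rewrite lt0r nrm_eq0 f_neq0 nrm_ge0.
pose c : R := (nrm f)^-1.
have c_ge0 : 0 <= c by rewrite invr_ge0 ltW.
have nrm_cf : nrm (c%:C *: f) = 1 by rewrite nrmZr ger0_norm // mulVf ?gt_eqF.
have := Tq _ (subspaceZ S0 SZD c%:C Sf); rewrite nrm_cf lexx => /(_ isT).
by rewrite (linear_onZ S0 lT) // nrmZr ger0_norm // ler_pdivrMl // mulrC.
Qed.

Lemma opnorm_on_lt_bound (r : R) : 0 < r -> (opnorm_on S T < r%:E)%E ->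
  exists q, [/\ 0 <= q, q < r & forall f, S f -> nrm (T f) <= q * nrm f].
Proof.
move=> r_gt0; rewrite /opnorm_on; set sup := ereal_sup _ => sup_lt.
have sup_ub f : S f -> nrm f <= 1 -> ((nrm (T f))%:E <= sup)%E.
  by move=> Sf f1; apply: ereal_sup_ubound; exists f.
suff [q [q0 qr Tq]] : exists q, [/\ 0 <= q, q < r &
    forall f, S f -> nrm f <= 1 -> nrm (T f) <= q].
  by exists q; split=> //; exact: linear_on_unit_bound.
case: sup sup_ub sup_lt => [s| |] sup_ub sup_lt.
- exists (Num.max s 0); rewrite le_max lexx orbT gt_max r_gt0 andbT -lte_fin.
  by split=> // f Sf f1; rewrite le_max -lee_fin sup_ub.
- by rewrite ltNge leey in sup_lt.
- exists 0; split=> // f Sf f1.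
  by have := sup_ub f Sf f1; rewrite leeNy_eq.
Qed.

End OperatorNorm.

Section Contraction.
Context {R : realType} {V : completeNormedModType R[i]}.
Variables (S : set V) (T : V -> V) (q : R).
Hypotheses (S_closed : closed S) (TS : forall x, S x -> S (T x)).
Hypotheses (q_ge0 : 0 <= q) (q_lt1 : q < 1).
Hypothesis T_lipschitz :
  forall x y, S x -> S y -> nrm (T x - T y) <= q * nrm (x - y).
Variables (x0 : V) (Sx0 : S x0).

Let y n := iter n T x0.
(* [D n] is the tail from [n] on of the geometric series bounding the steps. *)
Let D n := nrm (T x0 - x0) * q ^+ n / (1 - q).

Let D_ge0 n : 0 <= D n.
Proof. by rewrite divr_ge0 ?mulr_ge0 ?exprn_ge0 ?nrm_ge0 // subr_ge0 ltW. Qed.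

Let Sy n : S (y n).
Proof. by elim: n => // n; apply: TS. Qed.

Lemma contraction_iter_step n : nrm (y n.+1 - y n) <= q ^+ n * nrm (T x0 - x0).
Proof.
elim: n => [|n IHn]; first by rewrite expr0 mul1r.
apply: le_trans (T_lipschitz (Sy n.+1) (Sy n)) _.
by rewrite exprS -mulrA ler_wpM2l.
Qed.

Lemma contraction_iter_dist n m : nrm (y (n + m) - y n) <= D n - D (n + m).
Proof.
have q1 : 1 - q != 0 by rewrite subr_eq0 gt_eqF.
elim: m => [|m IHm]; first by rewrite addn0 !subrr nrm0.
rewrite addnS -(subrKA (y (n + m)%N)) (le_trans (nrmD _ _)) //.
have -> : D n - D (n + m).+1 =
    q ^+ (n + m) * nrm (T x0 - x0) + (D n - D (n + m)%N).
  by rewrite /D exprS; field.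
exact: lerD (contraction_iter_step _) IHm.
Qed.

Lemma contraction_iter_cvg : cvgn y.
Proof.
have D_cvg0 : D n @[n --> \oo] --> 0.
  rewrite /D; under eq_fun do rewrite mulrAC.
  by apply: cvg_geometric; rewrite ger0_norm.
apply/cauchy_cvgP/cauchy_exP => e e_gt0.
have Re_gt0 : 0 < complex.Re e by move: e_gt0; rewrite ltcE => /andP[].
have [N _ DN] := cvgr_dist_lt _ _ D_cvg0 _ Re_gt0.
exists (y N), N => // n /= Nn.
rewrite -ball_normE /ball_ /= [e]ge0_complexE ?ltW // nrm_lt nrmB -(subnKC Nn).
apply: le_lt_trans (contraction_iter_dist _ _) _.
have := DN N (leqnn N); rewrite sub0r normrN => /(le_lt_trans (ler_norm _)).
by apply: le_lt_trans; rewrite lerBlDr lerDl D_ge0.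
Qed.

Theorem contraction_fixed_point : exists2 p, S p & T p = p.
Proof.
have y_cvg := contraction_iter_cvg; set p := limn y.
have Sp : S p by apply: closed_cvg y_cvg => //; apply: nearW.
exists p => //.
have Ty_Tp : T (y n) @[n --> \oo] --> T p.
  apply/cvgrPdist_lt => e e_gt0; near=> n.
  rewrite [e]ge0_complexE ?ltW // nrm_lt.
  apply: le_lt_trans (T_lipschitz Sp (Sy _)) _.
  have : nrm (p - y n) < complex.Re e.
    by rewrite -nrm_lt -ge0_complexE ?ltW //; near: n; apply: cvgr_dist_lt.
  by apply: le_lt_trans; rewrite ler_piMl ?nrm_ge0 // ltW.
have Ty_p : T (y n) @[n --> \oo] --> p by move: y_cvg; rewrite -cvg_shiftS.
exact: cvg_unique Ty_Tp Ty_p.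
Unshelve. all: end_near.
Qed.

End Contraction.

Section PerturbationOfIdentity.
Context {R : realType} {V : completeNormedModType R[i]}.
Variables (S : set V) (U : V -> V) (q : R).
Hypothesis S_subspace : closed_subspace S.
Hypotheses (US : forall f, S f -> S (U f)) (U_linear : linear_on S U).
Hypotheses (q_ge0 : 0 <= q) (q_lt1 : q < 1).
Hypothesis U_near_id : forall f, S f -> nrm (f - U f) <= q * nrm f.

Let S0 : S 0. Proof. by case: S_subspace. Qed.
Let SZD : forall a x y, S x -> S y -> S (a *: x + y).
Proof. by case: S_subspace. Qed.

Lemma near_id_lower_bound f : S f -> (1 - q) * nrm f <= nrm (U f).
Proof.
move=> Sf; have := nrmD (f - U f) (U f); rewrite subrK.
by have := U_near_id Sf; lra.
Qed.

Lemma near_id_inj x y : S x -> S y -> U x = U y -> x = y.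
Proof.
move=> Sx Sy Uxy; apply/eqP; rewrite -subr_eq0 -nrm_eq0 eq_le nrm_ge0 andbT.
have := near_id_lower_bound (subspaceB SZD Sx Sy).
rewrite (linear_onB U_linear) // Uxy subrr nrm0 pmulr_rle0 //.
by rewrite subr_gt0.
Qed.

Lemma near_id_surj g : S g -> exists2 f, S f & U f = g.
Proof.
move=> Sg; pose T f := g + (f - U f).
have TS f : S f -> S (T f).
  by move=> Sf; apply: subspaceD SZD _ _ Sg _; apply: subspaceB SZD _ _ Sf (US Sf).
have T_lipschitz x y : S x -> S y -> nrm (T x - T y) <= q * nrm (x - y).
  move=> Sx Sy; rewrite /T opprD addrACA subrr add0r.
  have -> : x - U x - (y - U y) = x - y - (U x - U y).
    by rewrite !opprD !opprK addrACA.
  by rewrite -(linear_onB U_linear) // U_near_id //; apply: subspaceB.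
have [|f Sf Tf] := contraction_fixed_point _ TS q_ge0 q_lt1 T_lipschitz Sg.
  by case: S_subspace.
exists f => //; apply/eqP; rewrite eq_sym -subr_eq0.
by apply/eqP/(addrI f); rewrite addr0 addrCA.
Qed.

Lemma near_id_inverse : exists Uinv : V -> V,
  [/\ forall f, S f -> [/\ S (Uinv f), U (Uinv f) = f & Uinv (U f) = f],
      linear_on S Uinv &
      forall f, S f -> nrm (Uinv f) <= (1 - q)^-1 * nrm f].
Proof.
pose Uinv g := xget 0 [set f | S f /\ U f = g].
have UinvP g : S g -> S (Uinv g) /\ U (Uinv g) = g.
  move=> Sg; apply: (@xgetPex _ 0 [set f | S f /\ U f = g]).
  by have [f Sf Ufg] := near_id_surj Sg; exists f.
have q1 : 0 < 1 - q by rewrite subr_gt0.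
exists Uinv; split.
- move=> f Sf; have [SUf UUf] := UinvP f Sf; split=> //.
  by have [SUinvUf UUinvUf] := UinvP _ (US Sf); apply: near_id_inj; rewrite ?US.
- move=> a x y Sx Sy; have [Sx' Ux'] := UinvP x Sx; have [Sy' Uy'] := UinvP y Sy.
  have [Sz Uz] := UinvP _ (SZD a Sx Sy).
  by apply: near_id_inj => //; [exact: SZD | rewrite Uz U_linear // Ux' Uy'].
- move=> f Sf; have [SUf UUf] := UinvP f Sf.
  by rewrite ler_pdivlMl // -{2}UUf near_id_lower_bound.
Qed.

End PerturbationOfIdentity.

Section Adjoint.
Context {R : realType} {V : completeNormedModType R[i]}.
Variables (ip : V -> V -> R[i]) (ip_inner : is_inner_product ip).

Lemma inner_productBl x y z : ip (x - y) z = ip x z - ip y z.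
Proof.
by case: ip_inner => ipZD _ _; rewrite addrC -scaleN1r ipZD mulN1r addrC.
Qed.

Lemma inner_product_eq0 x : (forall y, ip x y = 0) -> x = 0.
Proof.
case: ip_inner => _ _ ip_norm x_orth; apply/normr0_eq0/eqP.
by rewrite -sqrf_eq0 ip_norm x_orth.
Qed.

Lemma adjoint_linear_on (H : set V) (L A : V -> V) :
  (forall a x y, H x -> H y -> H (a *: x + y)) ->
  (forall g f, H g -> ip (A g) f = ip g (L f)) -> linear_on H A.
Proof.
move=> HZD adjA a x y Hx Hy; apply/eqP; rewrite -subr_eq0; apply/eqP.
apply: inner_product_eq0 => f; case: ip_inner => ipZD _ _.
by rewrite inner_productBl (adjA _ _ (HZD a _ _ Hx Hy)) !ipZD !adjA // subrr.
Qed.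

End Adjoint.

Lemma HasSum_linear_on {R : realType} {V : completeNormedModType R[i]}
    (S : set V) (J : set int) (u : int -> V -> V) (U : V -> V) :
  (forall a x y, S x -> S y -> S (a *: x + y)) ->
  (forall j, J j -> linear_on S (u j)) ->
  (forall f, S f -> HasSum J (fun j => u j f) (U f)) -> linear_on S U.
Proof.
move=> SZD u_lin u_sum a x y Sx Sy.
apply: HasSum_unique (u_sum _ (SZD a x y Sx Sy)) _.
apply: eq_HasSum (HasSumZD a (u_sum _ Sx) (u_sum _ Sy)) => j Jj.
by rewrite u_lin.
Qed.

Lemma gBessel_on_comp {R : realType} {V : completeNormedModType R[i]}
    (S S' : set V) (J : set int) (L : int -> V -> V) (W : V -> V) (M : R) :
  gBessel_on S' J L -> (forall f, S f -> S' (W f)) -> 0 < M ->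
  (forall f, S f -> nrm (W f) <= M * nrm f) ->
  gBessel_on S J (fun j f => L j (W f)).
Proof.
move=> [B [B_gt0 LB]] WS' M_gt0 WM; exists (B * M ^+ 2).
split=> [|f Sf F FJ]; first by rewrite mulr_gt0 ?exprn_gt0.
apply: le_trans (LB _ (WS' _ Sf) F FJ) _.
rewrite -mulrA -exprMn; apply: ler_wpM2l; first exact: ltW.
by rewrite !expr2; apply: ler_pM; rewrite ?nrm_ge0 ?WM.
Qed.

Lemma closed_subspace_range {R : realType} {V : completeNormedModType R[i]}
    (K : V -> V) :
  (forall a x y, K (a *: x + y) = a *: K x + K y) -> closed (range K) ->
  closed_subspace (range K).
Proof.
move=> K_lin K_closed; split=> //.
  by exists 0 => //; apply: (linear_on0 (S := setT)) => // a x y _ _.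
by move=> a _ _ [x _ <-] [y _ <-]; exists (a *: x + y).
Qed.

Theorem mainTheorem5 (R : realType) (V : completeNormedModType R[i])
    (ip : V -> V -> R[i]) (J : set int) (Hs : int -> set V) (K : V -> V)
    (Lam Theta LamAdj : int -> V -> V) (U : V -> V) :
  is_inner_product ip ->
  separable_space V ->
  (forall j, J j -> closed_subspace (Hs j)) ->
  bounded_linear K -> closed (range K) ->
  (forall j, J j ->
     [/\ bounded_linear (Lam j), bounded_linear (Theta j),
         (forall f, Hs j (Lam j f)) & (forall f, Hs j (Theta j f))]) ->
  (* LamAdj j is the adjoint Lam_j^* : H_j -> H of Lam_j : H -> H_j *)
  (forall j, J j -> forall g f, Hs j g -> ip (LamAdj j g) f = ip g (Lam j f)) ->
  gBessel_on setT J Lam -> gBessel_on setT J Theta ->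
  (* U : R(K) -> R(K), U f = sum_j Lam_j^* Theta_j f *)
  (forall f, range K f ->
     HasSum J (fun j => LamAdj j (Theta j f)) (U f) /\ range K (U f)) ->
  (opnorm_on (range K) (fun f => (f - U f)%R) < 1%:E)%E ->
  exists Uinv : V -> V,
    [/\ (forall f, range K f -> [/\ range K (Uinv f), U (Uinv f) = f & Uinv (U f) = f]),
        bounded_linear_on (range K) Uinv,
        gBessel_on (range K) J (fun j f => Theta j (Uinv f)) &
        (forall f, range K f -> HasSum J (fun j => LamAdj j (Theta j (Uinv f))) f)].
Proof.
move=> ip_inner _ Hs_subspace [K_lin _] K_closed LamTheta LamAdj_adj.
move=> _ Theta_bessel U_sum U_near_id.
have S_subspace := closed_subspace_range K_lin K_closed.
have [S0 SZD _] := S_subspace.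
have U_linear : linear_on (range K) U.
  apply: HasSum_linear_on SZD _ (fun f Sf => (U_sum f Sf).1) => j Jj.
  have [_ [ Theta_lin _] _ ThetaHs] := LamTheta j Jj.
  have [_ HsZD _] := Hs_subspace j Jj.
  apply: linear_on_comp (fun a x y _ _ => Theta_lin a x y) (fun x _ => ThetaHs x) _.
  exact: (adjoint_linear_on ip_inner HsZD (LamAdj_adj j Jj)).
have IU_linear : linear_on (range K) (fun f => f - U f).
  by move=> a x y Sx Sy; rewrite U_linear // scalerBr addrACA opprD.
have [q [q_ge0 q_lt1 Uq]] := opnorm_on_lt_bound S0 SZD IU_linear ltr01 U_near_id.
have US f : range K f -> range K (U f) by move=> /U_sum[].
have [Uinv [UinvK Uinv_linear Uinv_bound]] :=
  near_id_inverse S_subspace US U_linear q_ge0 q_lt1 Uq.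
exists Uinv; split=> //.
- by split=> //; exists (1 - q)^-1.
- apply: gBessel_on_comp Theta_bessel (fun _ _ => I) _ Uinv_bound.
  by rewrite invr_gt0 subr_gt0.
- move=> f Sf; have [SUinvf UUinvf _] := UinvK f Sf.
  by rewrite -{2}UUinvf; exact: (U_sum _ SUinvf).1.
Qed.
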